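(* Let $\mathcal{X}$ be a finite set and let $e:\mathcal{X}\times\mathcal{X}\to\mathbb{R}$ be a semimetric, i.e. $e(x,y)=e(y,x)$ for all $x,y\in\mathcal{X}$, and $e(x,y)\ge 0$ for all $x,y\in\mathcal{X}$ with equality if and only if $x=y$. Then there is a metric $d$ on $\mathcal{X}$ such that for every $x,y,z\in\mathcal{X}$, $d(x,y)<d(x,z)$ if and only if $e(x,y)<e(x,z)$. *)

From Stdlib Require Import Reals FinFun.
Open Scope R_scope.

Definition is_semimetric {X : Type} (e : X -> X -> R) : Prop :=
  (forall x y, e x y = e y x) /\
  (forall x y, 0 <= e x y) /\
  (forall x y, e x y = 0 <-> x = y).

Definition is_metric {X : Type} (d : X -> X -> R) : Prop :=
  is_semimetric d /\ (forall x y z, d x z <= d x y + d y z).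

From Stdlib Require Import Reals FinFun List Lra.
Open Scope R_scope.

(** Raise every nonzero distance by a constant [M] bounding [e].  The map
    [t |-> t + M] on positive values is strictly increasing, so the orderings
    of distances are unchanged, and after the shift any two nonzero distances
    sum to at least [2 M], which dominates every nonzero distance: the
    triangle inequality holds.  A finite semimetric is bounded, so such an
    [M] exists. *)

Lemma list_upper_bound {A : Type} (g : A -> R) (l : list A) :
  exists M, forall a, In a l -> g a <= M.
Proof.
  induction l as [|a l [M HM]]; simpl.
  - exists 0. intros _ [].
  - exists (Rmax (g a) M). intros b [<- | Hb].
    + apply Rmax_l.
    + eapply Rle_trans; [apply HM, Hb | apply Rmax_r].
Qed.

Lemma finite_upper_bound2 {X : Type} (f : X -> X -> R) :
  Finite X -> exists M, forall x y, f x y <= M.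
Proof.
  intros [l Hl].
  destruct (list_upper_bound (fun p => f (fst p) (snd p)) (list_prod l l))
    as [M HM].
  exists M. intros x y. apply (HM (x, y)), in_prod; apply Hl.
Qed.

Definition shift_pos (M t : R) : R := if Req_EM_T t 0 then 0 else t + M.

Lemma shift_pos_lt (M s t : R) : 0 <= M -> 0 <= s -> 0 <= t ->
  shift_pos M s < shift_pos M t <-> s < t.
Proof.
  intros HM Hs Ht. unfold shift_pos.
  destruct (Req_EM_T s 0), (Req_EM_T t 0); split; intro; lra.
Qed.

Section ShiftedSemimetric.

Variables (X : Type) (e : X -> X -> R) (M : R).
Hypothesis He : is_semimetric e.
Hypothesis e_le_M : forall x y, e x y <= M.

Let d (x y : X) : R := shift_pos M (e x y).

Lemma shifted_bound_nonneg (x : X) : 0 <= M.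
Proof.
  destruct He as [_ [He_ge0 _]].
  apply Rle_trans with (e x x); [apply He_ge0 | apply e_le_M].
Qed.

Lemma shifted_is_semimetric : is_semimetric d.
Proof.
  destruct He as [He_sym [He_ge0 He_zero]].
  unfold d, shift_pos.
  split; [|split].
  - intros x y. rewrite He_sym. reflexivity.
  - intros x y. pose proof (shifted_bound_nonneg x).
    destruct (Req_EM_T (e x y) 0); [lra|]. pose proof (He_ge0 x y). lra.
  - intros x y. pose proof (shifted_bound_nonneg x).
    destruct (Req_EM_T (e x y) 0) as [E|E].
    + split; [intros _; apply He_zero, E | reflexivity].
    + split; intro Hxy.
      * pose proof (He_ge0 x y). lra.
      * exfalso. apply E, He_zero, Hxy.
Qed.

Lemma shifted_triangle (x y z : X) : d x z <= d x y + d y z.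
Proof.
  destruct shifted_is_semimetric as [_ [d_ge0 d_zero]].
  pose proof (d_ge0 x y). pose proof (d_ge0 y z).
  destruct (Req_EM_T (d x y) 0) as [Exy|Exy].
  { apply d_zero in Exy. subst y. lra. }
  destruct (Req_EM_T (d y z) 0) as [Eyz|Eyz].
  { apply d_zero in Eyz. subst z. lra. }
  assert (e x y <> 0) by (unfold d, shift_pos in Exy; destruct Req_EM_T; tauto).
  assert (e y z <> 0) by (unfold d, shift_pos in Eyz; destruct Req_EM_T; tauto).
  destruct He as [_ [He_ge0 _]].
  pose proof (He_ge0 x y). pose proof (He_ge0 y z). pose proof (e_le_M x z).
  unfold d, shift_pos.
  destruct (Req_EM_T (e x z) 0), (Req_EM_T (e x y) 0), (Req_EM_T (e y z) 0);
    try contradiction; lra.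
Qed.

Lemma shifted_is_metric : is_metric d.
Proof. split; [apply shifted_is_semimetric | apply shifted_triangle]. Qed.

Lemma shifted_lt_iff (x y z : X) : d x y < d x z <-> e x y < e x z.
Proof.
  destruct He as [_ [He_ge0 _]].
  apply shift_pos_lt; [apply (shifted_bound_nonneg x) | apply He_ge0 ..].
Qed.

End ShiftedSemimetric.

Theorem mainTheorem4 (X : Type) (HX : Finite X) (e : X -> X -> R)
  (He : is_semimetric e) :
  exists d : X -> X -> R, is_metric d /\
    (forall x y z, d x y < d x z <-> e x y < e x z).
Proof.
  destruct (finite_upper_bound2 e HX) as [M e_le_M].
  exists (fun x y => shift_pos M (e x y)).
  split.
  - exact (shifted_is_metric X e M He e_le_M).
  - exact (shifted_lt_iff X e M He e_le_M).
Qed.
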